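(* Let $L=\sum_{k=1}^m P_{n_k}$ be a linear forest and $n$ a positive integer. Then $L\in\operatorname{obs}(P_n)$ if and only if one of the following holds: (1) $\mu(L)=n+1$ and $n_k=2$ for all $k\in\{1,\dots,m\}$; (2) $\mu(L)=n+1$, $n_k\in\{1,2,4,6\}$ for all $k$, and $m_1=1$; (3) $\mu(L)=n+2$, $n_k\in\{1,2,4\}$ for all $k$, and $m_1=1$.
   Context: All graphs are finite, simple and loopless. $P_n$ denotes the path on $n$ vertices ($P_1=K_1$, $P_2=K_2$). A linear forest is a disjoint union of paths; $\sum_{k=1}^m P_{n_k}$ denotes the linear forest whose $k$-th component is the path on $n_k$ vertices, and $m_i$ denotes the number of indices $k$ with $n_k=i$. A full-homomorphism $\varphi\colon G\to H$ is a map $V(G)\to V(H)$ such that for all $x,y\in V(G)$, $xy\in E(G)$ if and only if $\varphi(x)\varphi(y)\in E(H)$. A full $H$-colouring of $G$ is a full-homomorphism $G\to H$. A minimal $H$-obstruction is a graph $G$ that admits no full $H$-colouring while every proper induced subgraph of $G$ admits one; $\operatorname{obs}(H)$ denotes the set of minimal $H$-obstructions (up to isomorphism). For a linear forest $L$, $\mu(L)$ is the minimum integer $n$ such that there is an injective full-homomorphism from $L$ to $P_n$. *)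

From mathcomp Require Import all_boot.
Local Open Scope nat_scope.
Set Implicit Arguments. Unset Strict Implicit. Unset Printing Implicit Defensive.

(* A (simple, loopless) graph is given by a finite vertex type T and a
   symmetric irreflexive adjacency relation e : rel T. *)

Definition path_rel (n : nat) : rel 'I_n :=
  fun i j => ((i : nat).+1 == j) || ((j : nat).+1 == i).

Definition full_hom (T U : finType) (e : rel T) (f : rel U) (phi : T -> U) : Prop :=
  forall x y, e x y = f (phi x) (phi y).

Definition full_colourable (T U : finType) (e : rel T) (f : rel U) : Prop :=
  exists phi : T -> U, full_hom e f phi.

Definition sub_vert (T : finType) (S : {set T}) : finType :=
  {x : T | x \in S}.

Definition induced (T : finType) (e : rel T) (S : {set T}) : rel (sub_vert S) :=
  fun x y => e (val x) (val y).

Definition min_obstruction (T U : finType) (e : rel T) (f : rel U) : Prop :=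
  ~ full_colourable e f /\
  forall S : {set T}, S \proper [set: T] -> full_colourable (@induced T e S) f.

(* The linear forest sum_{k} P_{n_k}, where ns = [:: n_1; ...; n_m]:
   vertices are pairs (k, i) with k < m and i < n_k. *)
Definition LF_vert (ns : seq nat) : finType :=
  {k : 'I_(size ns) & 'I_(nth 0 ns k)}.

Definition LF_rel (ns : seq nat) : rel (LF_vert ns) :=
  fun x y => (tag x == tag y) &&
    (((tagged x : nat).+1 == tagged y) || ((tagged y : nat).+1 == tagged x)).

Definition inj_full_to_path (ns : seq nat) (k : nat) : Prop :=
  exists phi : LF_vert ns -> 'I_k, injective phi /\ full_hom (@LF_rel ns) (@path_rel k) phi.

Definition mu_eq (ns : seq nat) (k : nat) : Prop :=
  inj_full_to_path ns k /\ forall j, inj_full_to_path ns j -> k <= j.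

From mathcomp Require Import all_boot zify.
From Stdlib Require Import Classical_Prop.

Set Implicit Arguments. Unset Strict Implicit. Unset Printing Implicit Defensive.

(* If the linear forest L has no component P_3 and at most one P_1, it has no
   twins (distinct vertices with the same neighbourhood), so every full
   homomorphism out of L is injective.  An injective full homomorphism into a
   path lays the components out as disjoint, pairwise non-adjacent intervals;
   hence it exists into P_k exactly when k >= W - 1, where W adds n_j + 1 over
   all components, and mu(L) = W - 1.  A P_3 or a second P_1 folds onto a proper
   induced subgraph, so a minimal obstruction L is twin-free, and it is one
   exactly when mu(L) > n while every vertex-deleted subgraph, after folding its
   at most one twin pair, has mu <= n.  Deleting an inner vertex cuts a path and
   raises W by one; deleting an end lowers W by one, and deleting a P_1 lowers it
   by two.  Comparing these changes with n leaves exactly the three families. *)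

Definition nat_adj (a b : nat) : bool := (a.+1 == b) || (b.+1 == a).

(* Maps between forests and into paths are handled as functions on such pairs
   of naturals, constrained only on the vertices satisfying a predicate [P]. *)
Definition forest_vertex (ns : seq nat) (k i : nat) : bool :=
  (k < size ns) && (i < nth 0 ns k).

Definition forest_adj (k i k' i' : nat) : bool := (k == k') && nat_adj i i'.

Definition all_vertices : nat -> nat -> bool := fun _ _ => true.

Definition full_map (ns : seq nat) (P : nat -> nat -> bool) (ns' : seq nat)
    (K I : nat -> nat -> nat) : Prop :=
  (forall k i, forest_vertex ns k i -> P k i -> forest_vertex ns' (K k i) (I k i)) /\
  (forall k i k' i', forest_vertex ns k i -> P k i -> forest_vertex ns k' i' -> P k' i' ->
     forest_adj (K k i) (I k i) (K k' i') (I k' i') = forest_adj k i k' i').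

Definition path_colouring (ns : seq nat) (P : nat -> nat -> bool) (n : nat)
    (g : nat -> nat -> nat) : Prop :=
  (forall k i, forest_vertex ns k i -> P k i -> g k i < n) /\
  (forall k i k' i', forest_vertex ns k i -> P k i -> forest_vertex ns k' i' -> P k' i' ->
     nat_adj (g k i) (g k' i') = forest_adj k i k' i').

Definition forest_injective (ns : seq nat) (g : nat -> nat -> nat) : Prop :=
  forall k i k' i', forest_vertex ns k i -> forest_vertex ns k' i' ->
    g k i = g k' i' -> k = k' /\ i = i'.

Definition vertex_set (ns : seq nat) (P : nat -> nat -> bool) : {set LF_vert ns} :=
  [set x : LF_vert ns | P (tag x) (tagged x)].

Definition forest_vert (ns : seq nat) (k i : nat) (hk : k < size ns)
    (hi : i < nth 0 ns k) : LF_vert ns :=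
  existT (fun k0 : 'I_(size ns) => 'I_(nth 0 ns k0)) (Ordinal hk) (Ordinal hi).

Definition on_pairs (ns : seq nat) (f : LF_vert ns -> nat) (k i : nat) : nat :=
  match ltnP k (size ns) with
  | LtnNotGeq hk =>
    match ltnP i (nth 0 ns k) with
    | LtnNotGeq hi => f (forest_vert hk hi)
    | _ => 0 end
  | _ => 0 end.

Lemma on_pairsE ns f k i (hk : k < size ns) (hi : i < nth 0 ns k) :
  on_pairs f k i = f (forest_vert hk hi).
Proof.
rewrite /on_pairs; case: ltnP => hk'; last by exfalso; lia.
case: ltnP => hi'; last by exfalso; lia.
by rewrite (bool_irrelevance hk' hk) (bool_irrelevance hi' hi).
Qed.

Lemma forest_vertex_tag ns (x : LF_vert ns) : forest_vertex ns (tag x) (tagged x).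
Proof. by case: x => [[k hk] [i hi]]; rewrite /forest_vertex /= hk hi. Qed.

Lemma LF_vert_eq ns (x y : LF_vert ns) :
  (tag x : nat) = tag y -> (tagged x : nat) = tagged y -> x = y.
Proof.
case: x => [k i]; case: y => [k' i'] /= /val_inj ek; subst k'.
by move=> /val_inj ->.
Qed.

Lemma path_relE n (a b : 'I_n) : path_rel a b = nat_adj a b.
Proof. by []. Qed.

Lemma path_colouring_of_full_hom ns n (phi : LF_vert ns -> 'I_n) :
  full_hom (@LF_rel ns) (@path_rel n) phi ->
  path_colouring ns all_vertices n (on_pairs (fun x => val (phi x))).
Proof.
move=> phi_full; split.
- by move=> k i /andP [hk hi] _; rewrite (on_pairsE _ hk hi) ltn_ord.
- move=> k i k' i' /andP [hk hi] _ /andP [hk' hi'] _.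
  by rewrite (on_pairsE _ hk hi) (on_pairsE _ hk' hi') -path_relE -phi_full.
Qed.

Lemma forest_injective_of_injective ns n (phi : LF_vert ns -> 'I_n) :
  injective phi -> forest_injective ns (on_pairs (fun x => val (phi x))).
Proof.
move=> phi_inj k i k' i' /andP [hk hi] /andP [hk' hi'].
rewrite (on_pairsE _ hk hi) (on_pairsE _ hk' hi') => /val_inj /phi_inj e.
split; first by have := congr1 (fun x : LF_vert ns => (tag x : nat)) e.
by have := congr1 (fun x : LF_vert ns => (tagged x : nat)) e.
Qed.

Lemma full_hom_of_path_colouring ns n g :
  path_colouring ns all_vertices n g ->
  exists2 phi : LF_vert ns -> 'I_n,
    full_hom (@LF_rel ns) (@path_rel n) phi & forall x, val (phi x) = g (tag x) (tagged x).
Proof.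
case=> g_lt g_adj.
exists (fun x => Ordinal (g_lt _ _ (forest_vertex_tag x) erefl)) => // x y.
by rewrite path_relE /= g_adj ?forest_vertex_tag.
Qed.

Lemma full_colourableP ns n :
  full_colourable (@LF_rel ns) (@path_rel n) <->
  exists g, path_colouring ns all_vertices n g.
Proof.
split=> [[phi phi_full] | [g /full_hom_of_path_colouring [phi phi_full _]]].
- by exists (on_pairs (fun x => val (phi x))); apply: path_colouring_of_full_hom.
- by exists phi.
Qed.

Lemma inj_full_to_pathP ns n :
  inj_full_to_path ns n <->
  exists g, path_colouring ns all_vertices n g /\ forest_injective ns g.
Proof.
split=> [[phi [phi_inj phi_full]] | [g [/full_hom_of_path_colouring [phi phi_full phiE] g_inj]]].
- exists (on_pairs (fun x => val (phi x))).
  by split; [apply: path_colouring_of_full_hom | apply: forest_injective_of_injective].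
- exists phi; split=> // x y /(congr1 val); rewrite !phiE => e.
  have [ek ei] := g_inj _ _ _ _ (forest_vertex_tag x) (forest_vertex_tag y) e.
  exact: LF_vert_eq.
Qed.

Lemma path_colouring_of_induced ns ns' n (P : nat -> nat -> bool) K I :
  full_map ns' all_vertices ns K I ->
  (forall k i, forest_vertex ns' k i -> P (K k i) (I k i)) ->
  full_colourable (@induced _ (@LF_rel ns) (vertex_set ns P)) (@path_rel n) ->
  exists g, path_colouring ns' all_vertices n g.
Proof.
case=> K_vert K_adj KP [psi psi_full].
pose f x := if insub x : option (sub_vert (vertex_set ns P)) is Some y then val (psi y) else 0.
have fE k i (hk : k < size ns) (hi : i < nth 0 ns k) : P k i ->
    exists u : sub_vert (vertex_set ns P),
      val u = forest_vert hk hi /\ on_pairs f k i = val (psi u).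
  move=> hP; have hin : forest_vert hk hi \in vertex_set ns P by rewrite inE.
  exists (Sub (forest_vert hk hi) hin); split=> //.
  by rewrite (on_pairsE _ hk hi) /f insubT.
exists (fun k i => on_pairs f (K k i) (I k i)); split.
- move=> k i hv _; have /andP [hk hi] := K_vert _ _ hv erefl.
  by have [u [_ ->]] := fE _ _ hk hi (KP _ _ hv); rewrite ltn_ord.
- move=> k i k' i' hv _ hv' _.
  have /andP [hk hi] := K_vert _ _ hv erefl.
  have /andP [hk' hi'] := K_vert _ _ hv' erefl.
  have [u [eu ->]] := fE _ _ hk hi (KP _ _ hv).
  have [u' [eu' ->]] := fE _ _ hk' hi' (KP _ _ hv').
  rewrite -path_relE -psi_full /induced eu eu'.
  exact: K_adj.
Qed.

Lemma induced_colourable_of_path_colouring ns n (P : nat -> nat -> bool) g :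
  path_colouring ns P n g ->
  full_colourable (@induced _ (@LF_rel ns) (vertex_set ns P)) (@path_rel n).
Proof.
case=> g_lt g_adj.
have uP (u : sub_vert (vertex_set ns P)) : P (tag (val u)) (tagged (val u)).
  by have := valP u; rewrite inE.
exists (fun u => Ordinal (g_lt _ _ (forest_vertex_tag (val u)) (uP u))) => u v.
by rewrite path_relE /= /induced g_adj ?forest_vertex_tag ?uP.
Qed.

Lemma induced_colourable_subset (T U : finType) (e : rel T) (f : rel U) (S S' : {set T}) :
  S \subset S' -> full_colourable (@induced T e S') f -> full_colourable (@induced T e S) f.
Proof.
move=> /subsetP sub [psi psi_full].
by exists (fun u : sub_vert S => psi (Sub (val u) (sub _ (valP u)))) => u v; rewrite -psi_full.
Qed.

(* A component with [x > 0] vertices, together with the gap to the next one,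
   takes up [x + 1] vertices of the host path; empty components (created by
   deleting an end vertex) take up none. *)
Definition comp_weight (x : nat) : nat := if x is 0 then 0 else x.+1.
Definition forest_weight (ns : seq nat) : nat := sumn (map comp_weight ns).
Definition forest_offset (ns : seq nat) (k : nat) : nat := sumn (map comp_weight (take k ns)).

Lemma comp_weight_pos x : 0 < x -> comp_weight x = x.+1.
Proof. by case: x. Qed.

Lemma comp_weight_cases x : (x = 0 /\ comp_weight x = 0) \/ (0 < x /\ comp_weight x = x.+1).
Proof. by case: x => [|x]; [left|right]. Qed.

Lemma forest_offsetS ns k :
  forest_offset ns k.+1 =
  forest_offset ns k + (if k < size ns then comp_weight (nth 0 ns k) else 0).
Proof.
rewrite /forest_offset; case: ltnP => hk.
- by rewrite (take_nth 0 hk) map_rcons sumn_rcons.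
- by rewrite !take_oversize ?addn0 //; lia.
Qed.

Lemma forest_offset_mono ns : {homo forest_offset ns : k k' / k <= k'}.
Proof.
move=> k k' /subnKC <-; elim: (k' - k) => [|d IH]; first by rewrite addn0.
rewrite addnS forest_offsetS; lia.
Qed.

Lemma forest_offset_gap ns k k' : k < k' -> k < size ns ->
  forest_offset ns k + comp_weight (nth 0 ns k) <= forest_offset ns k'.
Proof. by move=> /(forest_offset_mono ns) + hk; rewrite forest_offsetS hk. Qed.

Lemma forest_offset_bound ns k : k < size ns ->
  forest_offset ns k + comp_weight (nth 0 ns k) <= forest_weight ns.
Proof.
move=> hk; have := forest_offset_gap hk hk.
by rewrite /forest_offset [in X in _ <= X]take_size.
Qed.

Lemma forest_weight_set ns k a : k < size ns ->
  forest_weight (set_nth 0 ns k a) + comp_weight (nth 0 ns k) = forest_weight ns + comp_weight a.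
Proof.
elim: ns k => [|x ns IH] [|k] //= hk; rewrite /forest_weight /=; first lia.
by have := IH k hk; rewrite /forest_weight; lia.
Qed.

Lemma forest_weight_rcons ns b : forest_weight (rcons ns b) = forest_weight ns + comp_weight b.
Proof. by rewrite /forest_weight map_rcons sumn_rcons. Qed.

Lemma forest_weight_neq1 ns : forest_weight ns != 1.
Proof. by elim: ns => [|[|x] ns IH] //; rewrite /forest_weight /=; lia. Qed.

Lemma forest_weight_eq0 ns : (forall k, k < size ns -> nth 0 ns k = 0) -> forest_weight ns = 0.
Proof.
elim: ns => [|x ns IH] //= h0; have /= -> := h0 0 erefl.
by apply: IH => k; apply: (h0 k.+1).
Qed.

Lemma forest_vertex_set0 ns k0 k i : k0 < size ns ->
  forest_vertex (set_nth 0 ns k0 0) k i = forest_vertex ns k i && (k != k0).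
Proof.
move=> hk0; rewrite /forest_vertex size_set_nth nth_set_nth /=.
by case: eqP => [->|hne]; lia.
Qed.

Lemma path_colouring_layout ns n : (forest_weight ns).-1 <= n ->
  exists g, path_colouring ns all_vertices n g /\ forest_injective ns g.
Proof.
move=> hW.
have apart k i k' i' : forest_vertex ns k i -> forest_vertex ns k' i' -> k < k' ->
    forest_offset ns k + i + 2 <= forest_offset ns k' + i'.
  move=> /andP [hk hi] /andP [hk' hi'] hkk.
  by have := forest_offset_gap hkk hk; rewrite comp_weight_pos; lia.
exists (fun k i => forest_offset ns k + i); split; first split.
- move=> k i /andP [hk hi] _.
  by have := forest_offset_bound hk; rewrite comp_weight_pos; lia.
- move=> k i k' i' hv _ hv' _; rewrite /forest_adj /nat_adj.
  case: (ltngtP k k') => hkk; [have := apart _ _ _ _ hv hv' hkk | 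
    have := apart _ _ _ _ hv' hv hkk | subst k']; lia.
- move=> k i k' i' hv hv'.
  case: (ltngtP k k') => hkk; [have := apart _ _ _ _ hv hv' hkk | 
    have := apart _ _ _ _ hv' hv hkk | subst k']; lia.
Qed.

Lemma component_run ns n g k :
  path_colouring ns all_vertices n g -> forest_injective ns g -> k < size ns ->
  (forall i, i < nth 0 ns k -> g k i = g k 0 + i) \/
  (forall i, i < nth 0 ns k -> g k i + i = g k 0).
Proof.
move=> [_ g_adj] g_inj hk; set v := nth 0 ns k.
have vk i : i < v -> forest_vertex ns k i by move=> hi; rewrite /forest_vertex hk.
have adj i : i.+1 < v -> nat_adj (g k i) (g k i.+1).
  by move=> hi; rewrite g_adj ?vk //; [rewrite /forest_adj /nat_adj; lia | lia].
have nxt i : i.+2 < v -> g k i.+2 <> g k i.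
  by move=> hi e; have [_] := g_inj _ _ _ _ (vk _ hi) (vk i (ltnW (ltnW hi))) e; lia.
case: (ltnP 1 v) => hv; last by left=> i hi; rewrite (_ : i = 0) ?addn0 //; lia.
have := adj 0 hv; rewrite /nat_adj => /orP [/eqP up | /eqP down].
- left; have step i : i.+1 < v -> g k i.+1 = (g k i).+1.
    elim: i => [|i IH] hi; first by rewrite up.
    by have := IH (ltnW hi); have := adj _ hi; have := nxt _ hi; rewrite /nat_adj; lia.
  elim=> [|i IH] hi; first by rewrite addn0.
  by rewrite step //; have := IH (ltnW hi); lia.
- right; have step i : i.+1 < v -> (g k i.+1).+1 = g k i.
    elim: i => [|i IH] hi; first by rewrite down.
    by have := IH (ltnW hi); have := adj _ hi; have := nxt _ hi; rewrite /nat_adj; lia.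
  elim=> [|i IH] hi; first by rewrite addn0.
  by have := step _ hi; have := IH (ltnW hi); lia.
Qed.

(* The component through the top vertex [n - 1] is a run of consecutive vertices
   ending there, which no other component may meet or touch. *)
Lemma top_component_gap ns n g ks i0 :
  path_colouring ns all_vertices n g -> forest_injective ns g ->
  forest_vertex ns ks i0 -> g ks i0 = n.-1 ->
  nth 0 ns ks <= n /\
  forall k i, forest_vertex ns k i -> k != ks -> g k i + nth 0 ns ks + 1 <= n.-1.
Proof.
move=> gP g_inj hv top; have [g_lt g_adj] := gP; have /andP [hks his] := hv.
have n_gt0 : 0 < n by have := g_lt _ _ hv erefl; lia.
set v := nth 0 ns ks in his *.
have vk i : i < v -> forest_vertex ns ks i by move=> hi; rewrite /forest_vertex hks.
have below k i : forest_vertex ns k i -> g k i <= n.-1.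
  by move=> h; have := g_lt _ _ h erefl; lia.
have nadj k i j : forest_vertex ns k i -> k != ks -> j < v -> nat_adj (g k i) (g ks j) = false.
  by move=> h hne hj; rewrite g_adj ?vk //; rewrite /forest_adj; lia.
have nhit k i j : forest_vertex ns k i -> k != ks -> j < v -> g k i <> g ks j.
  by move=> h hne hj e; have [] := g_inj _ _ _ _ h (vk _ hj) e; lia.
case: (component_run gP g_inj hks) => run.
- have := run _ his; have := run v.-1 (ltac:(lia)); have := below _ _ (vk v.-1 (ltac:(lia))).
  rewrite top => hlast e1 e2; split; first lia.
  move=> k i h hne; have b := below _ _ h.
  case: (leqP (g ks 0) (g k i)) => c.
    exfalso; apply: (nhit _ _ (g k i - g ks 0) h hne); first lia.
    by rewrite run; lia.
  case: (leqP (g k i + v + 1) n.-1) => // c2.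
  by have := nadj _ _ 0 h hne (ltac:(lia)); rewrite /nat_adj; lia.
- have e0 : g ks 0 = n.-1.
    by have := run _ his; have := below _ _ (vk 0 (ltac:(lia))); lia.
  have hlast := run v.-1 (ltac:(lia)); split; first lia.
  move=> k i h hne; have b := below _ _ h.
  case: (leqP (n.-1 - v) (g k i)) => c; last lia.
  case: (leqP (n.-1 - v).+1 (g k i)) => c2.
    exfalso; apply: (nhit _ _ (n.-1 - g k i) h hne); first lia.
    by have := run (n.-1 - g k i) (ltac:(lia)); lia.
  have := nhit _ _ v.-1 h hne (ltac:(lia)).
  by have := nadj _ _ v.-1 h hne (ltac:(lia)); rewrite /nat_adj; lia.
Qed.

Lemma weight_le_of_injective_colouring n ns g :
  path_colouring ns all_vertices n g -> forest_injective ns g -> (forest_weight ns).-1 <= n.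
Proof.
elim/ltn_ind: n ns g => n IH ns g gP g_inj; have [g_lt g_adj] := gP.
case: (classic (exists k i, forest_vertex ns k i /\ g k i = n.-1)) => [[ks [i0 [hv top]]] | no_top].
- have [hvn gap] := top_component_gap gP g_inj hv top.
  have n_gt0 : 0 < n by have := g_lt _ _ hv erefl; lia.
  have /andP [hks his] := hv; set v := nth 0 ns ks in hvn gap his.
  set ns' := set_nth 0 ns ks 0.
  have gP' : path_colouring ns' all_vertices (n.-1 - v) g.
    split=> [k i | k i k' i']; rewrite ?forest_vertex_set0 //.
      by move=> /andP [h hne] _; have := gap _ _ h hne; lia.
    by move=> /andP [h _] _ /andP [h' _] _; exact: g_adj.
  have g_inj' : forest_injective ns' g.
    by move=> k i k' i'; rewrite !forest_vertex_set0 // => /andP [h _] /andP [h' _]; exact: g_inj.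
  have := IH (n.-1 - v) (ltac:(lia)) _ _ gP' g_inj'; have := forest_weight_neq1 ns'.
  by have := forest_weight_set 0 hks; rewrite -/v -/ns' comp_weight_pos; lia.
- case: (posnP n) => [n0 | n_gt0].
    rewrite forest_weight_eq0 // => k hk; subst n.
    case: (posnP (nth 0 ns k)) => // hp.
    by have := g_lt k 0; rewrite /forest_vertex hk hp => /(_ erefl erefl).
  suff /IH : path_colouring ns all_vertices n.-1 g by move=> /(_ (ltac:(lia)) g_inj); lia.
  split=> // k i h _; have := g_lt _ _ h erefl.
  have : g k i <> n.-1 by move=> e; apply: no_top; exists k, i.
  lia.
Qed.

Lemma mu_eqE ns k : mu_eq ns k <-> (forest_weight ns).-1 = k.
Proof.
have [g layout] := path_colouring_layout (leqnn (forest_weight ns).-1).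
have lower j : inj_full_to_path ns j -> (forest_weight ns).-1 <= j.
  by case/inj_full_to_pathP => g' [g'P g'_inj]; exact: weight_le_of_injective_colouring g'P g'_inj.
split=> [[hk k_min] | <-].
- by have := lower _ hk; have := k_min _ (proj2 (inj_full_to_pathP _ _) (ex_intro _ g layout)); lia.
- by split=> //; apply/inj_full_to_pathP; exists g.
Qed.

(* The linear forests without twins (distinct vertices with equal neighbourhoods). *)
Definition twin_free (ns : seq nat) : Prop :=
  (forall k, k < size ns -> nth 0 ns k != 3) /\
  (forall k1 k2, k1 < size ns -> k2 < size ns -> nth 0 ns k1 = 1 -> nth 0 ns k2 = 1 -> k1 = k2).

Lemma nat_adj_separates v i i' : 1 < v -> v != 3 -> i < v -> i' < v -> i != i' ->
  exists2 b, b < v & nat_adj i b != nat_adj i' b.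
Proof.
wlog lt_ii' : i i' / i < i' => [hwlog h1 h3 hi hi' ne | h1 h3 hi hi' _].
  case: (ltngtP i i') => c; [exact: hwlog | | by rewrite c eqxx in ne].
  by have [b hb e] := hwlog _ _ c h1 h3 hi' hi (negbT (ltn_eqF c)); exists b; rewrite // eq_sym.
case: (eqVneq i.+1 i') => e1; first by exists i; rewrite /nat_adj; lia.
case: (posnP i) => e2; last by exists i.-1; rewrite /nat_adj; lia.
case: (ltnP 2 i') => e3; first by exists 1; rewrite /nat_adj; lia.
by exists 3; rewrite /nat_adj; lia.
Qed.

Lemma twin_free_nbhd_inj ns k i k' i' : twin_free ns ->
  (forall a b, forest_vertex ns a b -> forest_adj k i a b = forest_adj k' i' a b) ->
  forest_vertex ns k i -> forest_vertex ns k' i' -> 1 < nth 0 ns k -> k = k' /\ i = i'.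
Proof.
move=> [no3 _] same /andP [hk hi] /andP [hk' hi'] hv; set v := nth 0 ns k in hv hi.
have vk b : b < v -> forest_vertex ns k b by move=> hb; rewrite /forest_vertex hk.
pose j := if i.+1 < v then i.+1 else i.-1.
have hj : j < v by rewrite /j; case: ifP; lia.
have aj : nat_adj i j by rewrite /j /nat_adj; case: ifP; lia.
have := same _ _ (vk _ hj); rewrite {1}/forest_adj eqxx aj => /esym /andP [/eqP ek _].
subst k'; split=> //; case: (eqVneq i i') => // ne.
have [b hb] := nat_adj_separates hv (no3 _ hk) hi hi' ne.
by have := same _ _ (vk _ hb); rewrite /forest_adj eqxx /= => ->; rewrite eqxx.
Qed.

(* Two vertices with the same image have the same neighbourhood. *)
Lemma forest_injective_of_twin_free ns n g :
  twin_free ns -> path_colouring ns all_vertices n g -> forest_injective ns g.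
Proof.
move=> tf [_ g_adj] k i k' i' hv hv' e.
have same a b : forest_vertex ns a b -> forest_adj k i a b = forest_adj k' i' a b.
  by move=> h; rewrite -!g_adj // e.
have /andP [hk hi] := hv; have /andP [hk' hi'] := hv'.
case: (ltnP 1 (nth 0 ns k)) => c1; first exact: twin_free_nbhd_inj same hv hv' c1.
case: (ltnP 1 (nth 0 ns k')) => c2.
  have same' a b : forest_vertex ns a b -> forest_adj k' i' a b = forest_adj k i a b.
    by move=> h; rewrite same.
  by have [-> ->] := twin_free_nbhd_inj tf same' hv' hv c2.
have ek := tf.2 k k' hk hk' (ltac:(lia)) (ltac:(lia)).
by split=> //; lia.
Qed.

Lemma count_mem_le1P (x : nat) ns :
  count_mem x ns <= 1 <->
  forall k1 k2, k1 < size ns -> k2 < size ns -> nth 0 ns k1 = x -> nth 0 ns k2 = x -> k1 = k2.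
Proof.
elim: ns => [|y s IH] /=; first by split=> // _ [].
case: (eqVneq y x) => [<- | ne] /=.
- rewrite add1n ltnS leqn0; split => [/eqP/count_memPn ny | uniq].
    have notin k : k < size s -> nth 0 s k <> y by move=> hk e; rewrite -e mem_nth in ny.
    by move=> [|k1] [|k2] //= h1 h2 e1 e2; [case: (notin k2) | case: (notin k1) ..].
  apply/eqP; apply/count_memPn; apply/negP => /(nthP 0) [k hk e].
  by have := uniq 0 k.+1 erefl hk erefl e.
- rewrite add0n IH; split=> uniq.
    move=> [|k1] [|k2] //= h1 h2 e1 e2; rewrite ?e1 ?e2 ?eqxx // in ne.
    by rewrite (uniq k1 k2).
  by move=> k1 k2 h1 h2 e1 e2; have [] := uniq k1.+1 k2.+1 h1 h2 e1 e2.
Qed.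

Lemma full_map_comp ns (P : nat -> nat -> bool) ns' K I ns'' K' I' :
  full_map ns P ns' K I -> full_map ns' all_vertices ns'' K' I' ->
  full_map ns P ns'' (fun k i => K' (K k i) (I k i)) (fun k i => I' (K k i) (I k i)).
Proof.
move=> [K_vert K_adj] [K'_vert K'_adj]; split.
- by move=> k i h hP; apply: K'_vert => //; apply: K_vert.
- by move=> k i k' i' h hP h' hP'; rewrite K'_adj ?K_vert //; exact: K_adj.
Qed.

Lemma path_colouring_comp ns (P : nat -> nat -> bool) ns' K I n g :
  full_map ns P ns' K I -> path_colouring ns' all_vertices n g ->
  path_colouring ns P n (fun k i => g (K k i) (I k i)).
Proof.
move=> [K_vert K_adj] [g_lt g_adj]; split.
- by move=> k i h hP; apply: g_lt => //; apply: K_vert.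
- by move=> k i k' i' h hP h' hP'; rewrite g_adj ?K_vert //; exact: K_adj.
Qed.

(* Deleting vertex [i0] of component [k0]: that component keeps its first [i0]
   vertices, and the remaining ones become a new last component. *)
Definition split_forest (ns : seq nat) (k0 i0 : nat) : seq nat :=
  rcons (set_nth 0 ns k0 i0) (nth 0 ns k0 - i0.+1).

Definition off_vertex (k0 i0 : nat) : nat -> nat -> bool :=
  fun k i => ~~ ((k == k0) && (i == i0)).

Lemma size_split_forest ns k0 i0 : k0 < size ns -> size (split_forest ns k0 i0) = (size ns).+1.
Proof. by move=> hk0; rewrite /split_forest size_rcons size_set_nth; lia. Qed.

Lemma nth_split_forest ns k0 i0 k : k0 < size ns ->
  nth 0 (split_forest ns k0 i0) k =
  if k == size ns then nth 0 ns k0 - i0.+1 else if k == k0 then i0 else nth 0 ns k.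
Proof.
move=> hk0; rewrite /split_forest nth_rcons size_set_nth nth_set_nth /=.
have -> : maxn k0.+1 (size ns) = size ns by lia.
case: ltngtP => c //; have -> : (k == k0) = false by lia.
by rewrite nth_default //; lia.
Qed.

Lemma forest_weight_split ns k0 i0 : k0 < size ns ->
  forest_weight (split_forest ns k0 i0) + comp_weight (nth 0 ns k0) =
  forest_weight ns + comp_weight i0 + comp_weight (nth 0 ns k0 - i0.+1).
Proof.
move=> hk0; rewrite /split_forest forest_weight_rcons.
by have := forest_weight_set i0 hk0; lia.
Qed.

Ltac no_if t := lazymatch t with context [if _ then _ else _] => fail | _ => idtac end.
Ltac case_lia :=
  repeat (match goal with
          | |- context [?a == ?b] => no_if a; no_if b; case: (@eqP _ a b) => ?
          | |- context [if ?c then _ else _] => no_if c; case: (boolP c) => ?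
          end; try subst; simpl); try lia.

Lemma split_forest_into_deletion ns k0 i0 : k0 < size ns -> i0 < nth 0 ns k0 ->
  full_map (split_forest ns k0 i0) all_vertices ns
    (fun k i => if k == size ns then k0 else k)
    (fun k i => if k == size ns then i + i0.+1 else i) /\
  (forall k i, forest_vertex (split_forest ns k0 i0) k i ->
     off_vertex k0 i0 (if k == size ns then k0 else k) (if k == size ns then i + i0.+1 else i)).
Proof.
move=> hk hi; split; first split.
- move=> k i; rewrite /forest_vertex size_split_forest // nth_split_forest // => + _.
  move: hk hi; case_lia.
- move=> k i k' i'; rewrite /forest_vertex /forest_adj /nat_adj size_split_forest //.
  rewrite !nth_split_forest // => + _ + _.
  move: hk hi; case_lia.
- move=> k i; rewrite /forest_vertex /off_vertex size_split_forest // nth_split_forest //.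
  move: hk hi; case_lia.
Qed.

Lemma deletion_into_split_forest ns k0 i0 : k0 < size ns -> i0 < nth 0 ns k0 ->
  full_map ns (off_vertex k0 i0) (split_forest ns k0 i0)
    (fun k i => if (k == k0) && (i0 < i) then size ns else k)
    (fun k i => if (k == k0) && (i0 < i) then i - i0.+1 else i).
Proof.
move=> hk hi; split.
- move=> k i; rewrite /forest_vertex /off_vertex size_split_forest // nth_split_forest //.
  move: hk hi; case_lia.
- move=> k i k' i'; rewrite /forest_vertex /off_vertex /forest_adj /nat_adj; move: hk hi; case_lia.
Qed.

Lemma fold_P3 ns k3 : k3 < size ns -> nth 0 ns k3 = 3 ->
  full_map ns all_vertices (set_nth 0 ns k3 2)
    (fun k i => k) (fun k i => if (k == k3) && (i == 2) then 0 else i).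
Proof.
move=> hk h3; split.
- move=> k i; rewrite /forest_vertex size_set_nth nth_set_nth; move: hk h3; case_lia.
- move=> k i k' i'; rewrite /forest_vertex /forest_adj /nat_adj; move: hk h3; case_lia.
Qed.

Lemma merge_P1 ns k1 k2 : k1 < size ns -> k2 < size ns -> k1 != k2 ->
  nth 0 ns k1 = 1 -> nth 0 ns k2 = 1 ->
  full_map ns all_vertices (set_nth 0 ns k2 0)
    (fun k i => if k == k2 then k1 else k) (fun k i => i).
Proof.
move=> hk1 hk2 hne h1 h2; split.
- move=> k i; rewrite /forest_vertex size_set_nth nth_set_nth; move: hk1 hk2 hne h1 h2; case_lia.
- move=> k i k' i'; rewrite /forest_vertex /forest_adj /nat_adj; move: hk1 hk2 hne h1 h2; case_lia.
Qed.

Lemma fold_P3_off ns k3 : k3 < size ns -> nth 0 ns k3 = 3 ->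
  full_map ns all_vertices ns (fun k i => k) (fun k i => if (k == k3) && (i == 2) then 0 else i) /\
  (forall k i, forest_vertex ns k i -> off_vertex k3 2 k (if (k == k3) && (i == 2) then 0 else i)).
Proof.
move=> hk h3; split; first split.
- move=> k i; rewrite /forest_vertex; move: hk h3; case_lia.
- move=> k i k' i'; rewrite /forest_vertex /forest_adj /nat_adj; move: hk h3; case_lia.
- move=> k i; rewrite /forest_vertex /off_vertex; move: hk h3; case_lia.
Qed.

Lemma merge_P1_off ns k1 k2 : k1 < size ns -> k2 < size ns -> k1 != k2 ->
  nth 0 ns k1 = 1 -> nth 0 ns k2 = 1 ->
  full_map ns all_vertices ns (fun k i => if k == k2 then k1 else k) (fun k i => i) /\
  (forall k i, forest_vertex ns k i -> off_vertex k2 0 (if k == k2 then k1 else k) i).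
Proof.
move=> hk1 hk2 hne h1 h2; split; first split.
- move=> k i; rewrite /forest_vertex; move: hk1 hk2 hne h1 h2; case_lia.
- move=> k i k' i'; rewrite /forest_vertex /forest_adj /nat_adj; move: hk1 hk2 hne h1 h2; case_lia.
- move=> k i; rewrite /forest_vertex /off_vertex; move: hk1 hk2 hne h1 h2; case_lia.
Qed.

Lemma deletion_proper ns k0 i0 : k0 < size ns -> i0 < nth 0 ns k0 ->
  vertex_set ns (off_vertex k0 i0) \proper [set: LF_vert ns].
Proof.
move=> hk hi; rewrite properT; apply/eqP => e.
by have := in_setT (forest_vert hk hi); rewrite -e inE /off_vertex /= !eqxx.
Qed.

Lemma proper_sub_deletion ns (S : {set LF_vert ns}) : S \proper [set: LF_vert ns] ->
  exists k0 i0, [/\ k0 < size ns, i0 < nth 0 ns k0 & S \subset vertex_set ns (off_vertex k0 i0)].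
Proof.
move/properP => [_ [v _ v_notin]]; have /andP [hk hi] := forest_vertex_tag v.
exists (tag v), (tagged v); split=> //; apply/subsetP => x hx.
rewrite inE /off_vertex; apply/negP => /andP [/eqP e1 /eqP e2].
by move: v_notin; rewrite -(LF_vert_eq e1 e2) hx.
Qed.

Lemma twin_free_split ns k0 i0 : twin_free ns -> k0 < size ns ->
  i0 != 3 -> nth 0 ns k0 - i0.+1 != 3 ->
  (1 \in ns -> (i0 != 1) && (nth 0 ns k0 - i0.+1 != 1)) ->
  ~~ ((i0 == 1) && (nth 0 ns k0 - i0.+1 == 1)) ->
  twin_free (split_forest ns k0 i0).
Proof.
move=> [no3 uniq1] hk not3 rest_not3 one_new not_both; split.
- move=> k; rewrite size_split_forest // nth_split_forest // => hk'.
  by case: ifP => [_|/negbT ne] //; case: ifP => // _; apply: no3; lia.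
- have one_in a : a < size ns -> nth 0 ns a = 1 -> 1 \in ns by move=> ha <-; exact: mem_nth.
  move=> a b; rewrite size_split_forest // !nth_split_forest // => ha hb.
  case: (eqVneq a (size ns)) => [ea|na]; case: (eqVneq b (size ns)) => [eb|nb];
  case: (eqVneq a k0) => [ea'|na']; case: (eqVneq b k0) => [eb'|nb']; move=> e1 e2;
  first [ lia | (have := one_new (one_in a (ltac:(lia)) e1); lia)
        | (have := one_new (one_in b (ltac:(lia)) e2); lia) | (apply: uniq1; lia) ].
Qed.

Lemma colourable_of_full_map ns n (P : nat -> nat -> bool) ns' K I :
  full_map ns P ns' K I -> (forest_weight ns').-1 <= n ->
  full_colourable (@induced _ (@LF_rel ns) (vertex_set ns P)) (@path_rel n).
Proof.
move=> R hW; have [g [gP _]] := path_colouring_layout hW.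
exact: induced_colourable_of_path_colouring (path_colouring_comp R gP).
Qed.

Lemma colourable_fold_P3 ns n (P : nat -> nat -> bool) ns' K I k3 :
  full_map ns P ns' K I -> k3 < size ns' -> nth 0 ns' k3 = 3 -> (forest_weight ns').-1 <= n.+1 ->
  full_colourable (@induced _ (@LF_rel ns) (vertex_set ns P)) (@path_rel n).
Proof.
move=> R hk h3 hW; apply: colourable_of_full_map (full_map_comp R (fold_P3 hk h3)) _.
have := forest_weight_set 2 hk; rewrite h3 /=.
by have := forest_weight_neq1 (set_nth 0 ns' k3 2); lia.
Qed.

Lemma colourable_merge_P1 ns n (P : nat -> nat -> bool) ns' K I k1 k2 :
  full_map ns P ns' K I -> k1 < size ns' -> k2 < size ns' -> k1 != k2 ->
  nth 0 ns' k1 = 1 -> nth 0 ns' k2 = 1 -> (forest_weight ns').-1 <= n.+2 ->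
  full_colourable (@induced _ (@LF_rel ns) (vertex_set ns P)) (@path_rel n).
Proof.
move=> R hk1 hk2 ne h1 h2 hW.
apply: colourable_of_full_map (full_map_comp R (merge_P1 hk1 hk2 ne h1 h2)) _.
by have := forest_weight_set 0 hk2; rewrite h2 /=; lia.
Qed.

Definition obstruction_families (ns : seq nat) (n : nat) : Prop :=
  [\/ (forest_weight ns).-1 = n.+1 /\ all (fun nk => nk == 2) ns,
      [/\ (forest_weight ns).-1 = n.+1, all (fun nk => nk \in [:: 1; 2; 4; 6]) ns &
          count_mem 1 ns = 1]
    | [/\ (forest_weight ns).-1 = n.+2, all (fun nk => nk \in [:: 1; 2; 4]) ns &
          count_mem 1 ns = 1]].

Section Obstruction.

Variables (ns : seq nat) (n : nat).
Hypothesis ns_pos : forall k, k < size ns -> 0 < nth 0 ns k.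
Hypothesis not_col : ~ full_colourable (@LF_rel ns) (@path_rel n).
Hypothesis del_col : forall k0 i0, k0 < size ns -> i0 < nth 0 ns k0 ->
  full_colourable (@induced _ (@LF_rel ns) (vertex_set ns (off_vertex k0 i0))) (@path_rel n).

Lemma obstruction_twin_free : twin_free ns.
Proof.
split.
- move=> k hk; apply/eqP => h3; apply: not_col; apply/full_colourableP.
  have [R Roff] := fold_P3_off hk h3.
  exact: path_colouring_of_induced R Roff (del_col hk (ltac:(lia) : 2 < nth 0 ns k)).
- move=> k1 k2 hk1 hk2 h1 h2; case: (eqVneq k1 k2) => // ne; exfalso.
  apply: not_col; apply/full_colourableP.
  have [R Roff] := merge_P1_off hk1 hk2 ne h1 h2.
  exact: path_colouring_of_induced R Roff (del_col hk2 (ltac:(lia) : 0 < nth 0 ns k2)).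
Qed.

Lemma obstruction_mu_gt : n.+1 <= (forest_weight ns).-1.
Proof.
rewrite ltnNge; apply/negP => hW; apply: not_col; apply/full_colourableP.
by have [g [gP _]] := path_colouring_layout hW; exists g.
Qed.

Lemma obstruction_split_bound k i0 : k < size ns -> i0 < nth 0 ns k ->
  twin_free (split_forest ns k i0) ->
  forest_weight ns + comp_weight i0 + comp_weight (nth 0 ns k - i0.+1) <=
  n.+1 + comp_weight (nth 0 ns k).
Proof.
move=> hk hi tf; have [R Roff] := split_forest_into_deletion hk hi.
have [g gP] := path_colouring_of_induced R Roff (del_col hk hi).
have := weight_le_of_injective_colouring gP (forest_injective_of_twin_free tf gP).
by have := forest_weight_split i0 hk; lia.
Qed.

(* Cutting a path into two nonempty twin-free pieces raises the weight by one,
   which [obstruction_mu_gt] forbids. *)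
Lemma obstruction_component k : k < size ns -> nth 0 ns k \in [:: 1; 2; 4; 6].
Proof.
move=> hk; have pos := ns_pos hk; have not3 := obstruction_twin_free.1 k hk.
rewrite !inE; apply/negPn/negP => bad.
have tf := twin_free_split (i0 := 2) obstruction_twin_free hk (ltac:(lia)) (ltac:(lia))
  (ltac:(move=> *; lia)) (ltac:(lia)).
have := obstruction_split_bound (i0 := 2) hk (ltac:(lia)) tf; have := obstruction_mu_gt.
have := comp_weight_cases (nth 0 ns k - 3); have := comp_weight_cases (nth 0 ns k).
by rewrite /=; lia.
Qed.

Lemma obstruction_long_component k : k < size ns -> 3 < nth 0 ns k -> 1 \in ns.
Proof.
move=> hk long; have := obstruction_component hk; rewrite !inE => sz.
apply/negPn/negP => no1.
have tf := twin_free_split (i0 := 1) obstruction_twin_free hk (ltac:(lia)) (ltac:(lia))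
  (ltac:(by move=> one; rewrite one in no1)) (ltac:(lia)).
have := obstruction_split_bound (i0 := 1) hk (ltac:(lia)) tf; have := obstruction_mu_gt.
have := comp_weight_cases (nth 0 ns k - 2); have := comp_weight_cases (nth 0 ns k).
by rewrite /=; lia.
Qed.

Lemma obstruction_P1_mu : 1 \in ns -> (forest_weight ns).-1 <= n.+2.
Proof.
move=> /(nthP 0) [k hk h1']; have h1 : nth 0 ns k = 1 := h1'.
have tf := twin_free_split (i0 := 0) obstruction_twin_free hk (ltac:(lia)) (ltac:(lia))
  (ltac:(move=> *; lia)) (ltac:(lia)).
have := obstruction_split_bound (i0 := 0) hk (ltac:(lia)) tf.
by have := comp_weight_cases (nth 0 ns k - 1); rewrite h1 /=; lia.
Qed.

Lemma obstruction_P6_mu k : k < size ns -> nth 0 ns k = 6 -> (forest_weight ns).-1 <= n.+1.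
Proof.
move=> hk h6.
have tf := twin_free_split (i0 := 0) obstruction_twin_free hk (ltac:(lia)) (ltac:(lia))
  (ltac:(move=> *; lia)) (ltac:(lia)).
have := obstruction_split_bound (i0 := 0) hk (ltac:(lia)) tf.
by have := comp_weight_cases (nth 0 ns k - 1); rewrite h6 /=; lia.
Qed.

Lemma obstruction_P2_mu k : 1 \notin ns -> k < size ns -> nth 0 ns k = 2 ->
  (forest_weight ns).-1 <= n.+1.
Proof.
move=> no1 hk h2.
have tf := twin_free_split (i0 := 0) obstruction_twin_free hk (ltac:(lia)) (ltac:(lia))
  (ltac:(by move=> one; rewrite one in no1)) (ltac:(lia)).
have := obstruction_split_bound (i0 := 0) hk (ltac:(lia)) tf.
by have := comp_weight_cases (nth 0 ns k - 1); rewrite h2 /=; lia.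
Qed.

Lemma obstruction_in_families :
  obstruction_families ns n.
Proof.
have mu_gt := obstruction_mu_gt.
case: (boolP (1 \in ns)) => one.
- have c1 : count_mem 1 ns = 1.
    have /count_mem_le1P := obstruction_twin_free.2.
    have : count_mem 1 ns != 0 by apply/eqP => /count_memPn; rewrite one.
    lia.
  have := obstruction_P1_mu one; case: (eqVneq (forest_weight ns).-1 n.+1) => mu mu_le.
    by apply: Or32; split=> //; apply/(all_nthP 0) => k hk; apply: obstruction_component.
  apply: Or33; split=> //; first lia.
  apply/(all_nthP 0) => k hk; have := obstruction_component hk; rewrite !inE.
  by case: (eqVneq (nth 0 ns k) 6) => [/(obstruction_P6_mu hk) | _]; lia.
- have all2 k : k < size ns -> nth 0 ns k = 2.
    move=> hk; have := obstruction_component hk; rewrite !inE.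
    have : nth 0 ns k != 1 by apply: contraNneq one => <-; exact: mem_nth.
    have : ~~ (3 < nth 0 ns k) by apply: contraNN one; exact: obstruction_long_component.
    lia.
  have hsz : 0 < size ns by move: mu_gt; case: (ns).
  apply: Or31; split; first by have := obstruction_P2_mu one hsz (all2 0 hsz); lia.
  by apply/(all_nthP 0) => k hk; rewrite all2.
Qed.

End Obstruction.

Lemma min_obstruction_of_deletions ns n :
  twin_free ns -> n.+1 <= (forest_weight ns).-1 ->
  (forall k0 i0, k0 < size ns -> i0 < nth 0 ns k0 ->
    full_colourable (@induced _ (@LF_rel ns) (vertex_set ns (off_vertex k0 i0))) (@path_rel n)) ->
  min_obstruction (@LF_rel ns) (@path_rel n).
Proof.
move=> tf mu_gt del_col; split.
- case/full_colourableP => g gP.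
  by have := weight_le_of_injective_colouring gP (forest_injective_of_twin_free tf gP); lia.
- move=> S /proper_sub_deletion [k0 [i0 [hk hi sub]]].
  exact: induced_colourable_subset sub (del_col _ _ hk hi).
Qed.

Lemma deletion_colourable_all2 ns n k0 i0 :
  (forall k, k < size ns -> nth 0 ns k = 2) -> (forest_weight ns).-1 = n.+1 ->
  k0 < size ns -> i0 < nth 0 ns k0 ->
  full_colourable (@induced _ (@LF_rel ns) (vertex_set ns (off_vertex k0 i0))) (@path_rel n).
Proof.
move=> all2 mu hk hi; apply: colourable_of_full_map (deletion_into_split_forest hk hi) _.
have := forest_weight_split i0 hk; have := all2 _ hk; have := comp_weight_cases (nth 0 ns k0).
by have := comp_weight_cases i0; have := comp_weight_cases (nth 0 ns k0 - i0.+1); lia.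
Qed.

(* Each deletion leaves at worst one twin pair (a [P_3], or a second [P_1]); folding
   it away lowers the weight by one, resp. two. *)
Lemma deletion_colourable_with_P1 ns n k1 k0 i0 :
  (forall k, k < size ns -> nth 0 ns k \in [:: 1; 2; 4; 6]) ->
  k1 < size ns -> nth 0 ns k1 = 1 ->
  (forest_weight ns).-1 <= n.+2 -> (nth 0 ns k0 = 6 -> (forest_weight ns).-1 <= n.+1) ->
  k0 < size ns -> i0 < nth 0 ns k0 ->
  full_colourable (@induced _ (@LF_rel ns) (vertex_set ns (off_vertex k0 i0))) (@path_rel n).
Proof.
move=> sizes hk1 h1 mu_le mu6 hk hi.
have R := deletion_into_split_forest hk hi.
have hw := forest_weight_split i0 hk; have hsz := size_split_forest i0 hk.
have n0 : nth 0 (split_forest ns k0 i0) k0 = i0.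
  by rewrite nth_split_forest // eqxx; case: eqP => //; lia.
have nS : nth 0 (split_forest ns k0 i0) (size ns) = nth 0 ns k0 - i0.+1.
  by rewrite nth_split_forest // eqxx.
have := sizes k0 hk; rewrite !inE => sz.
have w1 := comp_weight_cases i0; have w2 := comp_weight_cases (nth 0 ns k0 - i0.+1).
have w3 := comp_weight_cases (nth 0 ns k0).
case: (eqVneq k1 k0) => [ek | ne]; first by subst k1; apply: colourable_of_full_map R _; lia.
have n1 : nth 0 (split_forest ns k0 i0) k1 = 1.
  by rewrite nth_split_forest // (negbTE ne); case: eqP => //; lia.
case: (eqVneq i0 1) => c1.
  by apply: (colourable_merge_P1 (k1 := k1) (k2 := k0) R); lia.
case: (eqVneq (nth 0 ns k0 - i0.+1) 1) => c2.
  by apply: (colourable_merge_P1 (k1 := k1) (k2 := size ns) R); lia.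
case: (eqVneq i0 3) => c3.
  by apply: (colourable_fold_P3 (k3 := k0) R); lia.
case: (eqVneq (nth 0 ns k0 - i0.+1) 3) => c4.
  by apply: (colourable_fold_P3 (k3 := size ns) R); lia.
by apply: colourable_of_full_map R _; lia.
Qed.

Lemma min_obstruction_of_families ns n :
  (forall k, k < size ns -> 0 < nth 0 ns k) ->
  obstruction_families ns n ->
  min_obstruction (@LF_rel ns) (@path_rel n).
Proof.
move=> pos.
case=> [[mu /(all_nthP 0) all2] | [mu /(all_nthP 0) sizes c1] | [mu /(all_nthP 0) sizes c1]].
- have {}all2 k : k < size ns -> nth 0 ns k = 2 by move=> hk; apply/eqP/all2.
  apply: min_obstruction_of_deletions => [|| k0 i0]; last exact: deletion_colourable_all2; last lia.
  split=> [k hk | k1 k2 hk1 _ e1 _]; first by rewrite all2.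
  by have := all2 _ hk1; rewrite e1.
all: have tf : twin_free ns by split=> [k hk | ]; [have := sizes k hk; rewrite !inE; lia |
  apply/count_mem_le1P; rewrite c1].
all: have /(nthP 0) [k1 hk1 h1'] : 1 \in ns by apply/negPn/negP => /count_memPn; rewrite c1.
all: have h1 : nth 0 ns k1 = 1 := h1'.
all: apply: min_obstruction_of_deletions => //; first lia.
all: move=> k0 i0 hk hi; apply: (deletion_colourable_with_P1 _ hk1 h1 _ _ hk hi) => //; try lia.
- by move=> k hk'; have := sizes k hk'; rewrite !inE; lia.
- by move=> h6; have := sizes k0 hk; rewrite h6.
Qed.

Lemma min_obstruction_families ns n :
  (forall k, k < size ns -> 0 < nth 0 ns k) -> min_obstruction (@LF_rel ns) (@path_rel n) ->
  obstruction_families ns n.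
Proof.
move=> pos [not_col proper_col]; apply: obstruction_in_families pos not_col _ => k0 i0 hk hi.
exact/proper_col/deletion_proper.
Qed.

Unset Implicit Arguments.

Theorem proposition2p5 (ns : seq nat) (n : nat) :
  all (fun nk => 0 < nk) ns -> 0 < n ->
  (min_obstruction (@LF_rel ns) (@path_rel n) <->
   [\/ mu_eq ns n.+1 /\ all (fun nk => nk == 2) ns,
       [/\ mu_eq ns n.+1, all (fun nk => nk \in [:: 1; 2; 4; 6]) ns & count_mem 1 ns = 1]
     | [/\ mu_eq ns n.+2, all (fun nk => nk \in [:: 1; 2; 4]) ns & count_mem 1 ns = 1]]).
Proof.
move=> /(all_nthP 0) pos _; split=> [/(min_obstruction_families pos) | shape].
- case=> [[mu all2] | [mu sizes c1] | [mu sizes c1]];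
    [apply: Or31 | apply: Or32 | apply: Or33]; split=> //; exact/mu_eqE.
- apply: (min_obstruction_of_families pos).
  case: shape => [[/mu_eqE mu all2] | [/mu_eqE mu sizes c1] | [/mu_eqE mu sizes c1]];
    [apply: Or31 | apply: Or32 | apply: Or33]; by split.
Qed.
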